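(* Fix $m\ge 2$ and consider the game for SumLoss with top-1 feedback and binary relevance, as in the context. Let $\sigma_i,\sigma_j$ be two learner actions such that there is exactly one pair of objects $\{a,b\}$ whose positions differ in $\sigma_i$ and $\sigma_j$, with $a$ placed immediately before $b$ in $\sigma_i$ (i.e. $\sigma_i(b)=\sigma_i(a)+1$) and $b$ placed immediately before $a$ in $\sigma_j$ (i.e. $\sigma_j(a)=\sigma_j(b)+1$). Then $\sigma_i$ and $\sigma_j$ are neighboring actions.
   Context: Objects are $\{1,\dots,m\}$. Learner actions are the permutations $\sigma_1,\dots,\sigma_{m!}$ of $[m]$ ($\sigma(i)$ = rank of object $i$); adversary actions are the relevance vectors $r_1,\dots,r_{2^m}$ enumerating $\{0,1\}^m$. The loss matrix $L\in\mathbb{R}^{m!\times 2^m}$ has $L_{i,j}=\sum_{k=1}^m\sigma_i(k)r_j(k)$, with rows $\ell_i$. Let $\Delta=\{p\in\mathbb{R}^{2^m}:p_i\ge0,\sum_ip_i=1\}$ and $C_i=\{p\in\Delta:\ell_i\cdot p\le\ell_k\cdot p\ \forall k\}$. Action $i$ is Pareto-optimal if $C_i$ is non-empty and $(2^m-1)$-dimensional. Two Pareto-optimal actions $i,j$ are neighboring actions if $C_i\cap C_j$ is a $(2^m-2)$-dimensional polytope. *)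

From HB Require Import structures.
From mathcomp Require Import all_boot all_order all_algebra all_fingroup.
From mathcomp Require Import reals.
Set Implicit Arguments. Unset Strict Implicit. Unset Printing Implicit Defensive.
Import Order.TTheory GRing.Theory Num.Theory.
Local Open Scope ring_scope.

Section Game.
Variables (R : realType) (m : nat).

(* Objects are 'I_m (object k+1 of the paper is k).  A learner action is a
   permutation s : {perm 'I_m}; the rank of object k is (s k).+1 in {1..m}. *)
Definition rank (s : {perm 'I_m}) (k : 'I_m) : nat := (s k).+1.

(* Adversary actions: relevance vectors in {0,1}^m. *)
Definition relT := {ffun 'I_m -> bool}.
Definition N := #|{: relT}|.
Definition rel (j : 'I_N) : relT := enum_val j.

Definition loss (s : {perm 'I_m}) (r : relT) : R :=
  \sum_(k < m) (rank s k)%:R * (r k : nat)%:R.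

(* row ell_s of the loss matrix, columns indexed by the enumeration rel *)
Definition lossvec (s : {perm 'I_m}) : 'rV[R]_N := \row_j loss s (rel j).

Definition dotv (u v : 'rV[R]_N) : R := \sum_j u 0 j * v 0 j.

Definition simplex (p : 'rV[R]_N) : Prop :=
  (forall j, 0 <= p 0 j) /\ \sum_j p 0 j = 1.

Definition cell (s : {perm 'I_m}) (p : 'rV[R]_N) : Prop :=
  simplex p /\ forall t : {perm 'I_m}, dotv (lossvec s) p <= dotv (lossvec t) p.

(* Affine dimension of S is d: S contains x0 and x0 + (rows of D) with D having
   d linearly independent rows, and no larger affinely independent family exists.
   (This entails S nonempty.) *)
Definition affdim (S : 'rV[R]_N -> Prop) (d : nat) : Prop :=
  (exists x0, S x0 /\ exists D : 'M[R]_(d, N),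
      (forall i, S (x0 + row i D)) /\ row_free D) /\
  (forall x0 k (D : 'M[R]_(k, N)), S x0 -> (forall i, S (x0 + row i D)) ->
      row_free D -> (k <= d)%N).

Definition pareto_optimal (s : {perm 'I_m}) : Prop :=
  affdim (cell s) (2 ^ m - 1)%N.

(* C_s /\ C_t is always a polytope (intersection of the simplex with
   half-spaces), so only its dimension needs to be specified. *)
Definition neighbors (s t : {perm 'I_m}) : Prop :=
  [/\ pareto_optimal s, pareto_optimal t &
      affdim (fun p => cell s p /\ cell t p) (2 ^ m - 2)%N].

End Game.

From Pilot Require Import Defs.
From HB Require Import structures.
From mathcomp Require Import all_boot all_order all_algebra all_fingroup.
From mathcomp Require Import reals.
From mathcomp Require Import ring lra zify.
Set Implicit Arguments. Unset Strict Implicit. Unset Printing Implicit Defensive.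
Import Order.TTheory GRing.Theory Num.Theory.
Local Open Scope ring_scope.

(** The expected loss of [s] under [p] depends on [p] only through the marginals
   [q k], the probability that object [k] is relevant, and equals
   [\sum_k rank s k * q k]; by the rearrangement inequality [s] is optimal as soon
   as it ranks the objects by non-increasing [q].  A product of Bernoulli laws has
   prescribed marginals and full support.  Choosing its marginals strictly
   decreasing along [s], every small perturbation of total mass [0] stays in the
   cell of [s], which therefore has dimension [2^m - 1].  For the two actions of
   the theorem the loss difference is [q b - q a], so the common face lies in the
   hyperplane [q a = q b]; choosing marginals with [q a = q b] and all others
   strictly separated, every small perturbation in the codimension-2 subspace
   [{total mass 0, q a = q b}] stays in both cells, so the face has dimension
   [2^m - 2]. *)

Section Rearrangement.
Variables (R : realFieldType) (m : nat).

Lemma perm_val_count (t : {perm 'I_m}) k : (t k : nat) = (\sum_l (t l < t k))%N.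
Proof.
have -> : (\sum_l (t l < t k) = \sum_(i < m | i < t k) 1)%N.
  by rewrite [RHS](reindex_perm t) [RHS]big_mkcond.
by rewrite -(big_ord_widen m (fun=> 1%N)) ?sum1_card ?card_ord // ltnW.
Qed.

(* As [rank t k = 1 + #|[pred l | t l < t k]|], twice the loss charges every pair
   [k, l] with the value of the one that [t] ranks later; an [s]-antitone [q]
   makes each such charge minimal for [s]. *)
Definition later_value (t : {perm 'I_m}) (q : 'I_m -> R) k l : R :=
  ((t l < t k)%N : nat)%:R * q k + ((t k < t l)%N : nat)%:R * q l.

Lemma sum_rank_later_value (t : {perm 'I_m}) (q : 'I_m -> R) :
  2 * \sum_k (rank t k)%:R * q k =
  2 * \sum_k q k + \sum_k \sum_l later_value t q k l.
Proof.
have count_sum :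
    \sum_k (t k : nat)%:R * q k = \sum_k \sum_l ((t l < t k)%N : nat)%:R * q k.
  by apply: eq_bigr => k _; rewrite {1}perm_val_count natr_sum mulr_suml.
have -> : \sum_k (rank t k)%:R * q k = \sum_k q k + \sum_k (t k : nat)%:R * q k.
  by rewrite -big_split; apply: eq_bigr => k _; rewrite /rank -addn1 natrD /=; ring.
rewrite mulrDr; congr (_ + _); rewrite mulr2n mulrDl mul1r count_sum.
rewrite {2}exchange_big -big_split /=; apply: eq_bigr => k _.
by rewrite -big_split.
Qed.

Lemma later_value_le (s t : {perm 'I_m}) (q : 'I_m -> R) k l :
  (forall k l, (s k < s l)%N -> q l <= q k) ->
  later_value s q k l <= later_value t q k l.
Proof.
move=> hq; case: (eqVneq k l) => [->|kl]; first by rewrite /later_value !ltnn.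
have val_neq (u : {perm 'I_m}) : (u k : nat) != u l.
  by apply: contra kl => /eqP/val_inj/perm_inj ->.
rewrite /later_value.
case: (ltngtP (s k) (s l)) (val_neq s) => // hs _; have := hq _ _ hs;
  case: (ltngtP (t k) (t l)) (val_neq t) => // ht _ /=;
  rewrite ?mul1r ?mul0r ?add0r ?addr0 //; lra.
Qed.

Lemma rank_sum_le (s t : {perm 'I_m}) (q : 'I_m -> R) :
  (forall k l, (s k < s l)%N -> q l <= q k) ->
  \sum_k (rank s k)%:R * q k <= \sum_k (rank t k)%:R * q k.
Proof.
move=> hq; rewrite -(ler_pM2l (ltr0n R 2)) !sum_rank_later_value lerD2l.
by apply: ler_sum => k _; apply: ler_sum => l _; apply: later_value_le.
Qed.

Lemma sum_rank_perm (s t : {perm 'I_m}) :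
  \sum_k (rank s k)%:R = \sum_k (rank t k)%:R :> R.
Proof.
have sum_rank (u : {perm 'I_m}) : \sum_k (rank u k)%:R = \sum_(i < m) (i.+1%:R : R).
  by rewrite [RHS](reindex_perm u).
by rewrite !sum_rank.
Qed.

End Rearrangement.

Section Marginals.
Variables (R : realType) (m : nat).

Definition marginal (p : 'rV[R]_(N m)) (k : 'I_m) : R :=
  \sum_j p 0 j * (Defs.rel j k : nat)%:R.

Lemma dotv_lossvec (s : {perm 'I_m}) p :
  dotv (lossvec R s) p = \sum_k (rank s k)%:R * marginal p k.
Proof.
rewrite /dotv; under eq_bigr do rewrite mxE /loss big_distrl.
rewrite exchange_big; apply: eq_bigr => k _; rewrite /marginal big_distrr.
by apply: eq_bigr => j _ /=; ring.
Qed.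

Lemma cell_of_marginal (s : {perm 'I_m}) p : simplex p ->
  (forall k l, (s k < s l)%N -> marginal p l <= marginal p k) -> cell s p.
Proof. by move=> hp hq; split => // t; rewrite !dotv_lossvec; apply: rank_sum_le. Qed.

Lemma marginalD p v k : marginal (p + v) k = marginal p k + marginal v k.
Proof.
by rewrite /marginal -big_split; apply: eq_bigr => j _; rewrite mxE mulrDl.
Qed.

Lemma marginal_norm_le (v : 'rV[R]_(N m)) e k :
  (forall j, `|v 0 j| <= e) -> `|marginal v k| <= (N m)%:R * e.
Proof.
move=> hv; apply: le_trans (ler_norm_sum _ _ _) _.
apply: (@le_trans _ _ (\sum_(j < N m) e)); last by rewrite sumr_const card_ord mulr_natl.
apply: ler_sum => j _.
rewrite normrM; case: (Defs.rel j k) => /=; first by rewrite normr1 mulr1.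
by rewrite normr0 mulr0 (le_trans _ (hv j)).
Qed.

Lemma card_relT : N m = (2 ^ m)%N.
Proof. by rewrite /N card_ffun card_bool card_ord. Qed.

Lemma sum_rel (F : relT m -> R) : \sum_j F (Defs.rel j) = \sum_f F f.
Proof. by rewrite (big_enum_val (A := {: relT m}) F). Qed.

Definition bernoulli (Q : 'I_m -> R) k (b : bool) : R := if b then Q k else 1 - Q k.

Definition prod_bernoulli (Q : 'I_m -> R) : 'rV[R]_(N m) :=
  \row_j \prod_k bernoulli Q k (Defs.rel j k).

Lemma sum_prod_bernoulli Q : \sum_j prod_bernoulli Q 0 j = 1.
Proof.
under eq_bigr do rewrite mxE.
rewrite (sum_rel (fun f => \prod_k bernoulli Q k (f k))) -bigA_distr_bigA /=.
by apply: big1 => k _; rewrite big_bool /bernoulli /=; ring.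
Qed.

Lemma marginal_prod_bernoulli Q k0 : marginal (prod_bernoulli Q) k0 = Q k0.
Proof.
have prod_delta (F : 'I_m -> R) : \prod_k (if k == k0 then F k else 1) = F k0.
  by rewrite -big_mkcond big_pred1_eq.
rewrite /marginal; under eq_bigr do rewrite mxE.
rewrite (sum_rel (fun f => (\prod_k bernoulli Q k (f k)) * (f k0 : nat)%:R)).
under eq_bigr => f _ do
  rewrite -(prod_delta (fun k => (f k : nat)%:R)) -big_split /=.
rewrite -(bigA_distr_bigA
  (fun k b => bernoulli Q k b * (if k == k0 then (b : nat)%:R else 1))).
rewrite -(prod_delta Q) /=; apply: eq_bigr => k _.
by rewrite big_bool /bernoulli /=; case: (k == k0) => /=; ring.
Qed.

Lemma prod_bernoulli_ge Q c j : 0 <= c -> (forall k, c <= Q k <= 1 - c) ->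
  c ^+ m <= prod_bernoulli Q 0 j.
Proof.
move=> c0 hQ; rewrite mxE.
have -> : c ^+ m = \prod_(k < m) c by rewrite prodr_const card_ord.
apply: ler_prod => k _; rewrite c0 /bernoulli.
by have /andP[] := hQ k; case: (Defs.rel j k) => /= *; lra.
Qed.

End Marginals.

Section LevelPoints.
Variables (R : realType) (m : nat).

(* Level [h k < m] gets marginal [1 - (h k + 1) * gap], which lies in
   [[2 * gap, 1 - gap]] and is at least [gap] away from the other levels.  So all
   coordinates of [level_point h] are at least [gap ^+ m], and a perturbation of
   sup-norm at most [radius] keeps them non-negative while moving each marginal
   by at most [gap / 2]. *)
Definition gap : R := (m.+2%:R)^-1.

Definition radius : R := gap ^+ m.+1 / (2 * N m)%:R.

Definition level_point (h : 'I_m -> nat) : 'rV[R]_(N m) :=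
  prod_bernoulli (fun k => 1 - ((h k)%:R + 1) * gap).

Lemma gap_gt0 : 0 < gap.
Proof. by rewrite /gap invr_gt0 ltr0n. Qed.

Lemma radius_gt0 : 0 < radius.
Proof.
by rewrite /radius divr_gt0 ?exprn_gt0 ?gap_gt0 // ltr0n muln_gt0 card_relT expn_gt0.
Qed.

Lemma radius_bounds : radius <= gap ^+ m /\ 2 * ((N m)%:R * radius) <= gap.
Proof.
have g0 := gap_gt0; have g1 : gap <= 1 by rewrite /gap invf_le1 ?ltr0n // ler1n.
have gm0 : 0 < gap ^+ m by rewrite exprn_gt0.
have gm1 : gap ^+ m <= 1 by rewrite exprn_ile1 // ltW.
have N1 : 1 <= (N m)%:R :> R by rewrite ler1n card_relT expn_gt0.
have r0 := radius_gt0.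
have hr : radius * (2 * (N m)%:R) = gap * gap ^+ m.
  by rewrite /radius -exprS natrM mulfVK // mulf_neq0 ?pnatr_eq0 // -lt0n card_relT expn_gt0.
split; nra.
Qed.

Lemma level_point_ge (h : 'I_m -> nat) j : (forall k, (h k < m)%N) ->
  gap ^+ m <= level_point h 0 j.
Proof.
move=> hlt; have g0 := gap_gt0.
have gap_m2 : (m%:R + 2) * gap = 1 by rewrite /gap -(natrD R m 2) addn2 mulfV // pnatr_eq0.
apply: prod_bernoulli_ge (ltW g0) _ => k.
have hk : (h k)%:R + 1 <= m%:R :> R by rewrite -[1]/(1%:R) -natrD ler_nat addn1.
have h0 : 0 <= (h k)%:R :> R by [].
apply/andP; split; nra.
Qed.

Lemma simplex_level_point_add (h : 'I_m -> nat) (v : 'rV[R]_(N m)) :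
  (forall k, (h k < m)%N) -> \sum_j v 0 j = 0 -> (forall j, `|v 0 j| <= radius) ->
  simplex (level_point h + v).
Proof.
move=> hlt hsum hv; split=> [j|].
  have /andP[vj _] : - radius <= v 0 j <= radius by rewrite -ler_norml.
  have [r_le _] := radius_bounds.
  by rewrite mxE; have := level_point_ge j hlt; lra.
by rewrite (eq_bigr _ (fun j _ => mxE _ _ _ _)) big_split /= sum_prod_bernoulli hsum addr0.
Qed.

Lemma marginal_level_point_add_lt (h : 'I_m -> nat) (v : 'rV[R]_(N m)) k l :
  (h k < h l)%N -> (forall j, `|v 0 j| <= radius) ->
  marginal (level_point h + v) l <= marginal (level_point h + v) k.
Proof.
move=> hkl hv; rewrite !marginalD !marginal_prod_bernoulli.
have [_ r_gap] := radius_bounds; have g0 := gap_gt0.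
have hkl_R : (h k)%:R + 1 <= (h l)%:R :> R by rewrite -[1]/(1%:R) -natrD ler_nat addn1.
have := marginal_norm_le k hv; have := marginal_norm_le l hv.
rewrite !ler_norml => /andP[? ?] /andP[? ?]; nra.
Qed.

Lemma cell_level_point (s : {perm 'I_m}) (h : 'I_m -> nat) (v : 'rV[R]_(N m)) :
  (forall k, (h k < m)%N) -> (forall k l, (s k < s l)%N -> (h k <= h l)%N) ->
  \sum_j v 0 j = 0 -> (forall j, `|v 0 j| <= radius) ->
  (forall k l, h k = h l -> marginal v k = marginal v l) ->
  cell s (level_point h + v).
Proof.
move=> hlt hmono hsum hv htie.
apply: cell_of_marginal => [|k l hkl]; first exact: simplex_level_point_add.
have [e|ne] := eqVneq (h k) (h l).
  by rewrite !marginalD !marginal_prod_bernoulli e (htie _ _ e).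
by apply: marginal_level_point_add_lt => //; rewrite ltn_neqAle ne hmono.
Qed.

End LevelPoints.

Section Dimension.
Variables (R : realType) (m : nat).

Lemma affdim_kernel (S : 'rV[R]_(N m) -> Prop) r (C : 'M[R]_(N m, r))
    (K : 'rV[R]_r) x0 (e : R) :
  0 < e -> (forall x, S x -> x *m C = K) ->
  (forall v, v *m C = 0 -> (forall j, `|v 0 j| <= e) -> S (x0 + v)) ->
  affdim S (\rank (kermx C)).
Proof.
move=> e0 hK hball; split.
  exists x0; split.
    by rewrite -[x0]addr0; apply: hball => [|j]; rewrite ?mul0mx // mxE normr0 ltW.
  pose B := row_base (kermx C); pose M := 1 + \sum_i \sum_j `|B i j|.
  have sum_ge0 : 0 <= \sum_i \sum_j `|B i j| by rewrite !sumr_ge0 // => *; rewrite sumr_ge0.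
  have M0 : 0 < M by rewrite /M; lra.
  have eM0 : 0 < e / M by rewrite divr_gt0.
  have B_le i j : `|B i j| <= M - 1.
    rewrite /M addrC addKr (bigD1 i) //= (bigD1 j) //= -addrA lerDl.
    by rewrite addr_ge0 ?sumr_ge0 // => *; rewrite sumr_ge0.
  exists ((e / M) *: B); split.
    move=> i; apply: hball.
      have BC : B *m C = 0 by apply/sub_kermxP; rewrite eq_row_base.
      by rewrite -row_mul -scalemxAl BC scaler0 row0.
    move=> j; rewrite 2!mxE normrM gtr0_norm // mulrAC ler_pdivrMr // ler_pM2l //.
    by have := B_le i j; lra.
  by rewrite /row_free mxrank_scale_nz; [apply: row_base_free | exact: lt0r_neq0].
move=> y k D hy hrow hfree; rewrite -(eqP hfree); apply: mxrankS.
apply/sub_kermxP/row_matrixP => i; rewrite row_mul row0.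
by apply: (addrI K); rewrite addr0 -{1}(hK _ hy) -mulmxDl hK.
Qed.

End Dimension.

Section ParetoOptimality.
Variables (R : realType) (m : nat).

Lemma mulmx_const1 (x : 'rV[R]_(N m)) : x *m const_mx 1 = const_mx (\sum_j x 0 j) :> 'rV_1.
Proof.
by apply/rowP => c; rewrite !mxE; apply: eq_bigr => j _; rewrite mxE mulr1.
Qed.

Lemma pareto_optimal_perm (s : {perm 'I_m}) : pareto_optimal R s.
Proof.
pose C : 'M[R]_(N m, 1) := const_mx 1.
have rank_kerC : \rank (kermx C) = (2 ^ m - 1)%N.
  rewrite mxrank_ker -card_relT; congr (_ - _)%N.
  apply/eqP; rewrite eqn_leq rank_leq_col lt0n mxrank_eq0.
  apply/eqP => /matrixP/(_ (enum_rank ([ffun => false] : relT m)) 0).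
  by rewrite !mxE => /eqP; rewrite oner_eq0.
rewrite /pareto_optimal -rank_kerC.
apply: (affdim_kernel (K := const_mx 1) (x0 := level_point R (fun k => s k)) (radius_gt0 R m)).
- by move=> x [[_ sum1] _]; rewrite mulmx_const1 sum1.
- move=> v; rewrite mulmx_const1 => /rowP/(_ 0); rewrite !mxE => sum0 hv.
  apply: cell_level_point => //; first by move=> k l /ltnW.
  by move=> k l /val_inj/perm_inj ->.
Qed.

End ParetoOptimality.

Section TieConstraints.
Variables (R : realType) (m : nat).

Definition tie_constraints (a b : 'I_m) : 'M[R]_(N m, 2) :=
  \matrix_(j, c) if c == 0 then 1 else (Defs.rel j a : nat)%:R - (Defs.rel j b : nat)%:R.

Lemma rank_tie_constraints (a b : 'I_m) : a != b -> \rank (tie_constraints a b) = 2%N.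
Proof.
(* The rows of the relevance vectors [0] and [1_a] form [[1, 0], [1, 1]]. *)
move=> hab.
pose f (i : 'I_2) := enum_rank ([ffun k => (i != 0) && (k == a)] : relT m).
pose A := rowsub f (tie_constraints a b).
have A_entry i c : A i c = if c == 0 then 1 else ((i != 0) : nat)%:R.
  have hba : (b == a) = false by rewrite eq_sym (negbTE hab).
  by rewrite !mxE /Defs.rel enum_rankK !ffunE eqxx hba andbT andbF subr0.
have A_trig : is_trig_mx A.
  by apply/is_trig_mxP => -[[|[|i]] hi] // [[|[|j]] hj] //; rewrite A_entry.
have A_unit : A \in unitmx.
  by rewrite unitmxE (det_trig A_trig) !big_ord_recl big_ord0 !A_entry /= mulr1 mul1r unitr1.
apply/eqP; rewrite eqn_leq rank_leq_col -{1}(mxrank_unit A_unit).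
exact/mxrankS/rowsub_sub.
Qed.

Lemma mulmx_tie_constraints (a b : 'I_m) (x : 'rV[R]_(N m)) :
  x *m tie_constraints a b =
  \row_c if c == 0 then \sum_j x 0 j else marginal x a - marginal x b.
Proof.
apply/rowP => c; rewrite !mxE; under eq_bigr do rewrite mxE.
case: (c == 0); first by under eq_bigr do rewrite mulr1.
by rewrite /marginal -sumrB; under eq_bigr do rewrite mulrBr.
Qed.

End TieConstraints.

Section AdjacentTransposition.
Variables (R : realType) (m : nat) (si sj : {perm 'I_m}) (a b : 'I_m).
Hypotheses (hab : a != b) (hother : forall k : 'I_m, k != a -> k != b -> si k = sj k).
Hypotheses (hi : rank si b = (rank si a).+1) (hj : rank sj a = (rank sj b).+1).

Lemma sum_rank_diff (q : 'I_m -> R) :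
  \sum_k (rank si k)%:R * q k - \sum_k (rank sj k)%:R * q k =
  ((rank si a)%:R - (rank sj a)%:R) * q a + ((rank si b)%:R - (rank sj b)%:R) * q b.
Proof.
rewrite -sumrB (bigD1 a) //= (bigD1 b) 1?eq_sym //= big1 ?addr0; last first.
  by move=> k /andP[ka kb]; rewrite /rank (hother ka kb) subrr.
by rewrite -!mulrBl.
Qed.

Lemma rank_swap : rank sj b = rank si a /\ rank sj a = rank si b.
Proof.
have := sum_rank_diff (fun=> 1); rewrite !(eq_bigr _ (fun k _ => mulr1 _)).
rewrite (sum_rank_perm R si sj) subrr hi hj !mulr1 /rank -!natr1 => h0.
have /eqP : (sj b)%:R = (si a)%:R :> R by lra.
by rewrite eqr_nat => /eqP ->.
Qed.

Lemma swap_values :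
  [/\ (si b : nat) = (si a).+1, (sj a : nat) = (si a).+1 & (sj b : nat) = si a].
Proof. by case: rank_swap hi => -[->] -[->] -[->]. Qed.

Lemma sum_rank_swap (q : 'I_m -> R) :
  \sum_k (rank si k)%:R * q k - \sum_k (rank sj k)%:R * q k = q b - q a.
Proof. by rewrite sum_rank_diff; case: rank_swap => -> ->; rewrite hi -natr1; ring. Qed.

Lemma cells_swap_marginal (p : 'rV[R]_(N m)) :
  cell si p -> cell sj p -> marginal p a = marginal p b.
Proof.
move=> [_ hsi] [_ hsj]; have := hsi sj; have := hsj si.
by rewrite !dotv_lossvec; have := sum_rank_swap (marginal p); lra.
Qed.

(* [si] and [sj] agree once the positions [si a] and [si a + 1] are merged, so
   both are monotone for this level, whose only tie is between [a] and [b]. *)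
Definition merged_level (k : 'I_m) : nat := si k - (si a < si k).

Lemma merged_level_sj k : merged_level k = (sj k - (si a < sj k))%N.
Proof.
rewrite /merged_level; have [sb ja jb] := swap_values.
case: (eqVneq k a) => [->|ka]; first by rewrite ja; lia.
case: (eqVneq k b) => [->|kb]; first by rewrite sb jb; lia.
by rewrite hother.
Qed.

Lemma merged_level_eq k l : merged_level k = merged_level l ->
  k = l \/ [/\ k = a \/ k = b & l = a \/ l = b].
Proof.
have [sb _ _] := swap_values.
have at_ab (y : 'I_m) : (si y : nat) = si a \/ (si y : nat) = (si a).+1 -> y = a \/ y = b.
  by case=> e; [left | right]; apply/(@perm_inj _ si)/val_inj => /=; rewrite e ?sb.
rewrite /merged_level => e.
have [/val_inj/perm_inj ->|ne] := eqVneq (si k : nat) (si l); first by left.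
by right; split; apply: at_ab; lia.
Qed.

Lemma cells_swap_level_point (v : 'rV[R]_(N m)) :
  \sum_j v 0 j = 0 -> (forall j, `|v 0 j| <= radius R m) ->
  marginal v a = marginal v b ->
  cell si (level_point R merged_level + v) /\ cell sj (level_point R merged_level + v).
Proof.
move=> hsum hv hab_v.
have hlt k : (merged_level k < m)%N by rewrite /merged_level; have := ltn_ord (si k); lia.
have tie k l : merged_level k = merged_level l -> marginal v k = marginal v l.
  by case/merged_level_eq => [->|[[]-> []->]].
split; apply: cell_level_point => // k l; last by rewrite !merged_level_sj; lia.
by rewrite /merged_level; lia.
Qed.

Lemma affdim_swap_cells :
  affdim (fun p : 'rV[R]_(N m) => cell si p /\ cell sj p) (2 ^ m - 2)%N.
Proof.
have rank_ker : \rank (kermx (tie_constraints R a b)) = (2 ^ m - 2)%N.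
  by rewrite mxrank_ker -card_relT rank_tie_constraints.
rewrite -rank_ker.
apply: (affdim_kernel (K := \row_c if c == 0 then 1 else 0)
  (x0 := level_point R merged_level) (radius_gt0 R m)).
- move=> x [hx hx']; rewrite mulmx_tie_constraints (cells_swap_marginal hx hx') subrr.
  by case: hx => -[_ ->] _.
- move=> v; rewrite mulmx_tie_constraints => /rowP hv0 hv.
  have := hv0 0; have := hv0 1; rewrite !mxE /= => /eqP; rewrite subr_eq0 => /eqP hm hs.
  exact: cells_swap_level_point.
Qed.

End AdjacentTransposition.

Theorem lemma2 (R : realType) (m : nat) (hm : (2 <= m)%N)
  (si sj : {perm 'I_m}) (a b : 'I_m)
  (hother : forall k : 'I_m, k != a -> k != b -> si k = sj k)
  (hi : rank si b = (rank si a).+1)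
  (hj : rank sj a = (rank sj b).+1) :
  neighbors R si sj.
Proof.
have hab : a != b by apply/eqP => eab; move: hi; rewrite eab; lia.
split; [exact: pareto_optimal_perm | exact: pareto_optimal_perm |].
exact: (affdim_swap_cells R hab hother hi hj).
Qed.
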